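(* Let $m\ge1$, $n\ge1$ and let $P_1,\dots,P_m\in\mathcal{M}_n(\mathbb{C})$ be pairwise commuting matrices, i.e. $P_\alpha P_\beta=P_\beta P_\alpha$ for all $\alpha,\beta\in\{1,\dots,m\}$. Assume that one of the following holds: (i) each $P_\alpha$ is diagonalizable; or (ii) $n=2$ and each $P_\alpha$ is invertible. Let $k_1,\dots,k_m$ be positive integers. Then there exist matrices $Q_1,\dots,Q_m\in\mathcal{M}_n(\mathbb{C})$ such that (a) $Q_\alpha^{k_\alpha}=P_\alpha$ for all $\alpha\in\{1,\dots,m\}$, and (b) $Q_\alpha Q_\beta=Q_\beta Q_\alpha$ for all $\alpha,\beta\in\{1,\dots,m\}$. *)

(* The complex numbers are modelled as R[i] = complex R
   for an arbitrary R : realType (every realType is isomorphic to the reals,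
   so R[i] is (isomorphic to) C). *)
From HB Require Import structures.
From mathcomp Require Export all_boot all_order all_algebra.
From mathcomp Require Export reals.
From mathcomp Require Export complex.

(* Commuting diagonalizable matrices are simultaneously diagonalizable, so
   taking k-th roots of the diagonal entries in a common eigenbasis gives
   commuting roots.  For invertible 2x2 matrices that are not all scalar,
   pick a non-scalar P_c and an eigenvalue a of it: N := P_c - a is singular
   and non-scalar, so N^2 = tr(N) N by Cayley-Hamilton, and every matrix
   commuting with N lies in the commutative algebra spanned by 1 and N.
   In that algebra x + yN has determinant x (x + y tr(N)), and when this is
   nonzero a k-th root u + vN is explicit: u = x^(1/k), and u + v tr(N) =
   (x + y tr(N))^(1/k) if tr(N) != 0, while k u^(k-1) v = y if tr(N) = 0. *)

From mathcomp Require Import ring.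
Import GRing.Theory Num.Theory.
Local Open Scope ring_scope.

Definition comm_roots {R : pzRingType} {m n : nat}
    (P : 'I_m -> 'M[R]_n) (k : 'I_m -> nat) (Q : 'I_m -> 'M[R]_n) :=
  (forall a, Q a ^+ k a = P a) /\ (forall a b, comm_mx (Q a) (Q b)).

Lemma expr_diag_mx (R : pzSemiRingType) n (d : 'rV[R]_n) j :
  diag_mx d ^+ j = diag_mx (map_mx (fun x => x ^+ j) d).
Proof.
elim: j => [|j IHj].
  by apply/matrixP => i l; rewrite !mxE expr0.
by rewrite exprS IHj -mulmxE mulmx_diag; congr diag_mx; apply/rowP => i; rewrite !mxE exprS.
Qed.

Lemma conjmx_expr (F : fieldType) n (V f : 'M[F]_n) j :
  V \in unitmx -> conjmx V f ^+ j = conjmx V (f ^+ j).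
Proof.
move=> Vu; elim: j => [|j IHj].
  by rewrite !expr0 conjmx_scalar ?row_free_unit.
by rewrite !exprS IHj -!mulmxE conjmxM // inE stablemx_unit.
Qed.

Lemma diagonalizable_comm_roots (C : numClosedFieldType) m n
    (P : 'I_m -> 'M[C]_n) (k : 'I_m -> nat) :
  (forall a b, comm_mx (P a) (P b)) -> (forall a, diagonalizable (P a)) ->
  (forall a, 0 < k a)%N -> exists Q, comm_roots P k Q.
Proof.
move=> Pcomm Pdiag k_gt0.
have [V Vu /allP Vdiag] : codiagonalizable [seq P a | a <- enum 'I_m].
  by apply/codiagonalizableP; split=> [_ _ /mapP[a _ ->] /mapP[b _ ->]|_ /mapP[a _ ->]].
have /fin_all_exists[D PD] a : exists D, P a = conjmx (invmx V) (diag_mx D).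
  apply/(diagonalizable_forLR Vu).
  exact/Vdiag/map_f/mem_enum.
have Vinv_u : invmx V \in unitmx by rewrite unitmx_inv.
have stableV f : f \in [pred g | stablemx (invmx V) g] by rewrite inE stablemx_unit.
exists (fun a => conjmx (invmx V) (diag_mx (map_mx (k a).-root (D a)))); split=> [a|a b].
  rewrite conjmx_expr // expr_diag_mx PD; congr (conjmx _ (diag_mx _)).
  by apply/rowP => i; rewrite !mxE rootCK.
by rewrite /comm_mx -!conjmxM // diag_mxC.
Qed.

Section TwoByTwo.
Variable R : comNzRingType.
Implicit Types A B : 'M[R]_2.

Lemma ord2P (i : 'I_2) : i = 0 \/ i = 1.
Proof. by case: i => [[|[|//]] ?]; [left|right]; apply: val_inj. Qed.

Lemma lift0_ord2 : lift ord0 (ord0 : 'I_1) = 1 :> 'I_2.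
Proof. exact: val_inj. Qed.

Lemma mx2P A B :
  A 0 0 = B 0 0 -> A 0 1 = B 0 1 -> A 1 0 = B 1 0 -> A 1 1 = B 1 1 -> A = B.
Proof.
move=> e00 e01 e10 e11; apply/matrixP => i j.
by case: (ord2P i) => ->; case: (ord2P j) => ->.
Qed.

Lemma mulmx2E A B i j : (A *m B) i j = A i 0 * B 0 j + A i 1 * B 1 j.
Proof. by rewrite mxE !big_ord_recl big_ord0 addr0 lift0_ord2. Qed.

Lemma mxtrace2 A : \tr A = A 0 0 + A 1 1.
Proof. by rewrite /mxtrace !big_ord_recl big_ord0 addr0 lift0_ord2. Qed.

Lemma det2 A : \det A = A 0 0 * A 1 1 - A 0 1 * A 1 0.
Proof.
rewrite (expand_det_row _ 0) !big_ord_recl big_ord0 /cofactor !det_mx11 !mxE /=.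
rewrite lift0_ord2.
have -> : lift 1 (0 : 'I_1) = 0 :> 'I_2 by apply: val_inj.
by rewrite expr0 expr1 mul1r addr0 mulN1r mulrN.
Qed.

Lemma Cayley_Hamilton2 A : A *m A = \tr A *: A - (\det A)%:M.
Proof. by rewrite mxtrace2 det2; apply: mx2P; rewrite mulmx2E !mxE /=; ring. Qed.

Lemma det2_pencil A x y :
  \det (x%:M + y *: A) = x * (x + y * \tr A) + y ^+ 2 * \det A.
Proof. by rewrite !det2 mxtrace2 !mxE /=; ring. Qed.

Lemma nonscalar_mx2 A :
  ~~ is_scalar_mx A -> [|| A 0 1 != 0, A 1 0 != 0 | A 0 0 != A 1 1].
Proof.
apply: contraR; rewrite !negb_or !negbK => /and3P[/eqP A01 /eqP A10 /eqP A11].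
by apply/is_scalar_mxP; exists (A 0 0); apply: mx2P; rewrite !mxE /= ?mulr1n ?mulr0n.
Qed.
End TwoByTwo.

Lemma centralizer_mx2 {F : fieldType} {N B : 'M[F]_2} :
  ~~ is_scalar_mx N -> comm_mx B N -> exists x y, B = x%:M + y *: N.
Proof.
move=> /nonscalar_mx2 N_nonscalar /matrixP BN.
have := BN 0 0; have := BN 0 1; have := BN 1 0; have := BN 1 1.
rewrite !mulmx2E => e11 e10 e01 e00.
(* each entry not fixed by the choice of x, y is a multiple of a commutation relation *)
have eq_by (a b c l r : F) : a = b -> l - r = c * (a - b) -> l = r.
  by move=> -> h; apply/eqP; rewrite -subr_eq0 h subrr mulr0.
case/or3P: N_nonscalar => [N01|N10|N00].
- exists (B 0 0 - B 0 1 / N 0 1 * N 0 0), (B 0 1 / N 0 1).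
  apply: mx2P; rewrite !mxE /= ?mulr1n ?mulr0n.
  + by field.
  + by field.
  + by apply: (eq_by _ _ (- 1 / N 0 1) _ _ e00); field.
  + by apply: (eq_by _ _ (- 1 / N 0 1) _ _ e01); field.
- exists (B 0 0 - B 1 0 / N 1 0 * N 0 0), (B 1 0 / N 1 0).
  apply: mx2P; rewrite !mxE /= ?mulr1n ?mulr0n.
  + by field.
  + by apply: (eq_by _ _ (1 / N 1 0) _ _ e00); field.
  + by field.
  + by apply: (eq_by _ _ (1 / N 1 0) _ _ e10); field.
- have tr_neq0 : N 0 0 - N 1 1 != 0 by rewrite subr_eq0.
  exists (B 0 0 - (B 0 0 - B 1 1) / (N 0 0 - N 1 1) * N 0 0),
         ((B 0 0 - B 1 1) / (N 0 0 - N 1 1)).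
  apply: mx2P; rewrite !mxE /= ?mulr1n ?mulr0n.
  + by field.
  + by apply: (eq_by _ _ (- 1 / (N 0 0 - N 1 1)) _ _ e01); field.
  + by apply: (eq_by _ _ (1 / (N 0 0 - N 1 1)) _ _ e10); field.
  + by field.
Qed.

Lemma exists_singular_shift {F : closedFieldType} {n} (A : 'M[F]_n.+1) :
  exists a, \det (A - a%:M) = 0.
Proof.
have /closed_rootP[a] : size (char_poly A) != 1 by rewrite size_char_poly.
rewrite -eigenvalue_root_char => /eigenvalueP[v vA v_neq0]; exists a.
apply/eqP/det0P; exists v => //.
by rewrite mulmxBr vA mul_mx_scalar subrr.
Qed.

Section Pencil.
Context {F : fieldType} {n : nat} {N : 'M[F]_n} {d : F}.
Hypothesis sqrN : N *m N = d *: N.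

Lemma mul_pencil a b c e :
  (a%:M + b *: N) *m (c%:M + e *: N) = (a * c)%:M + (a * e + b * c + b * e * d) *: N.
Proof.
rewrite mulmxDl !mulmxDr !mul_scalar_mx mul_mx_scalar -scalemxAl -scalemxAr sqrN.
by rewrite scale_scalar_mx !scalerA !scalerDl -!addrA (mulrC c b).
Qed.

Lemma comm_pencil a b c e : comm_mx (a%:M + b *: N) (c%:M + e *: N).
Proof.
rewrite /comm_mx !mul_pencil mulrC; congr (_%:M + _ *: N); ring.
Qed.

Lemma expr_pencil a b j : d != 0 ->
  (a%:M + b *: N) ^+ j = (a ^+ j)%:M + (((a + b * d) ^+ j - a ^+ j) / d) *: N.
Proof.
move=> d_neq0; elim: j => [|j IHj].
  by rewrite !expr0 subrr mul0r scale0r addr0.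
rewrite exprS IHj -mulmxE mul_pencil !exprS; congr (_%:M + _ *: N).
by field.
Qed.

Lemma expr_pencil_nil a b j : d = 0 -> a != 0 ->
  (a%:M + b *: N) ^+ j = (a ^+ j)%:M + (j%:R * a ^+ j * b / a) *: N.
Proof.
move=> d0 a_neq0; elim: j => [|j IHj].
  by rewrite !expr0 !mul0r scale0r addr0.
rewrite exprS IHj -mulmxE mul_pencil !exprS -addn1 natrD d0; congr (_%:M + _ *: N).
by field.
Qed.
End Pencil.

Lemma pencil_root {C : numClosedFieldType} {n} {N : 'M[C]_n} {d x y : C} {k : nat} :
  N *m N = d *: N -> (0 < k)%N -> x != 0 -> x + y * d != 0 ->
  exists u v, (u%:M + v *: N) ^+ k = x%:M + y *: N.
Proof.
move=> sqrN k_gt0 x_neq0 xyd_neq0; pose u := k.-root x.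
have uk : u ^+ k = x by rewrite rootCK.
have [d0|d_neq0] := eqVneq d 0.
  have u_neq0 : u != 0 by apply: contra_neq x_neq0 => u0; rewrite -uk u0 expr0n gtn_eqF.
  have k_neq0 : k%:R != 0 :> C by rewrite pnatr_eq0 -lt0n.
  exists u, (y * u / (k%:R * x)).
  rewrite (expr_pencil_nil sqrN) // uk; congr (_%:M + _ *: N).
  field; by rewrite k_neq0 x_neq0 u_neq0.
pose w := k.-root (x + y * d).
exists u, ((w - u) / d); rewrite (expr_pencil sqrN) // uk.
have -> : u + (w - u) / d * d = w by field.
by rewrite rootCK //; congr (_%:M + _ *: N); field.
Qed.

Lemma unitmx2_comm_roots (C : numClosedFieldType) m (P : 'I_m -> 'M[C]_2)
    (k : 'I_m -> nat) :
  (forall a b, comm_mx (P a) (P b)) -> (forall a, P a \in unitmx) ->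
  (forall a, 0 < k a)%N -> exists Q, comm_roots P k Q.
Proof.
move=> Pcomm Punit k_gt0.
have [c Pc_nonscalar|Pscalar] := pickP (fun a => ~~ is_scalar_mx (P a)); last first.
  apply: diagonalizable_comm_roots => // a.
  by have /negbFE/is_scalar_mxP[x ->] := Pscalar a; apply: diagonalizable_scalar.
have [al detN] := exists_singular_shift (P c).
set N := P c - al%:M.
have sqrN : N *m N = \tr N *: N by rewrite Cayley_Hamilton2 detN raddf0 subr0.
have N_nonscalar : ~~ is_scalar_mx N.
  apply: contra Pc_nonscalar => /is_scalar_mxP[x Nx]; apply/is_scalar_mxP.
  by exists (x + al); rewrite raddfD /= -Nx subrK.
have commN b : comm_mx (P b) N.
  by rewrite /comm_mx mulmxBr mulmxBl Pcomm scalar_mxC.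
have /fin_all_exists[uv Puv] b : exists uv : C * C, (uv.1%:M + uv.2 *: N) ^+ k b = P b.
  have [x [y Pb]] := centralizer_mx2 N_nonscalar (commN b).
  move: (Punit b); rewrite Pb unitmxE unitfE det2_pencil detN mulr0 addr0.
  rewrite mulf_eq0 negb_or => /andP[x_neq0 xy_neq0].
  have [u [v uv_root]] := pencil_root sqrN (k_gt0 b) x_neq0 xy_neq0.
  by exists (u, v).
exists (fun a => (uv a).1%:M + (uv a).2 *: N); split=> // a b.
exact: (comm_pencil sqrN (uv a).1 (uv a).2 (uv b).1 (uv b).2).
Qed.

Theorem proposition2p9 (R : realType) (m n : nat)
  (P : 'I_m -> 'M[R[i]]_n) (k : 'I_m -> nat) :
  (0 < m)%N -> (0 < n)%N ->
  (forall a b : 'I_m, P a *m P b = P b *m P a) ->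
  ((forall a : 'I_m, diagonalizable (P a)) \/
   (n = 2%N /\ forall a : 'I_m, P a \in unitmx)) ->
  (forall a : 'I_m, (0 < k a)%N) ->
  exists Q : 'I_m -> 'M[R[i]]_n,
    (forall a : 'I_m, Q a ^+ k a = P a) /\
    (forall a b : 'I_m, Q a *m Q b = Q b *m Q a).
Proof.
move=> _ _ Pcomm [Pdiag|[n2 Punit]] k_gt0.
  exact: diagonalizable_comm_roots.
by subst n; apply: unitmx2_comm_roots.
Qed.
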